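(* Let $\mathbf{X}=(X,\mu_X,\mathcal{S}_X)$ and $\mathbf{Y}=(Y,\mu_Y,\mathcal{S}_Y)$ be symmetry measure spaces whose measures take values in a common complete linearly ordered set. Suppose there is a function $f:X\to Y$ such that (i) for every $\mu_Y$-measurable set $B\subset Y$ the preimage $f^{-1}(B)$ is $\mu_X$-measurable and $\mu_X(f^{-1}(B))\le \mu_Y(B)$; (ii) for every $s_X\in\mathcal{S}_X$ there is $s_Y\in\mathcal{S}_Y$ with $s_Y\circ f=f\circ s_X$. Then $\mathrm{ms}_r(\mathbf{X})\le \mathrm{ms}_r(\mathbf{Y})$ for every cardinal $r$.
   Context: A measure on a set $X$ is a monotone function $\mu:\mathrm{dom}(\mu)\to[\mu(\emptyset),\mu(X)]$ defined on a $\sigma$-algebra $\mathrm{dom}(\mu)$ of subsets of $X$ (the measurable sets) with values in a complete linearly ordered set (every subset has an infimum and a supremum); monotone means $\mu(A)\le\mu(B)$ whenever $A\subset B$ are measurable. A symmetry measure space is a triple $(X,\mu,\mathcal{S})$ where $\mathcal{S}$ is a family of bijections $X\to X$ (admissible symmetries) with $s^{-1}\in\mathcal{S}$ for each $s\in\mathcal{S}$, and each $s\in\mathcal{S}$ is measure-preserving: $s(A)$ is measurable and $\mu(s(A))=\mu(A)$ for each measurable $A$. A set $A\subset X$ is $\mathcal{S}$-symmetric if $s(A)=A$ for some $s\in\mathcal{S}$. For measurable $A$, $\mathrm{ms}(A)=\sup\{\mu(B): B\subset A \text{ measurable and } \mathcal{S}\text{-symmetric}\}$. For a cardinal $r$,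 $\mathrm{ms}_r(\mathbf{X})=\inf_{\chi}\sup_{i\in r}\mathrm{ms}(\chi^{-1}(i))$, the infimum over all measurable colorings $\chi:X\to r$ (i.e. each $\chi^{-1}(i)$ is measurable). *)

Definition subset {X : Type} (A B : X -> Prop) : Prop := forall x, A x -> B x.
Definition preimage {X Y : Type} (f : X -> Y) (B : Y -> Prop) : X -> Prop :=
  fun x => B (f x).
Definition image {X Y : Type} (f : X -> Y) (A : X -> Prop) : Y -> Prop :=
  fun y => exists x, A x /\ f x = y.

Record complete_chain := CompleteChain {
  cc_car :> Type;
  cc_le : cc_car -> cc_car -> Prop;
  cc_le_refl : forall x, cc_le x x;
  cc_le_trans : forall x y z, cc_le x y -> cc_le y z -> cc_le x z;
  cc_le_antisym : forall x y, cc_le x y -> cc_le y x -> x = y;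
  cc_le_total : forall x y, cc_le x y \/ cc_le y x;
  cc_sup : (cc_car -> Prop) -> cc_car;
  cc_sup_ub : forall S x, S x -> cc_le x (cc_sup S);
  cc_sup_least : forall S b, (forall x, S x -> cc_le x b) -> cc_le (cc_sup S) b;
  cc_inf : (cc_car -> Prop) -> cc_car;
  cc_inf_lb : forall S x, S x -> cc_le (cc_inf S) x;
  cc_inf_greatest : forall S b, (forall x, S x -> cc_le b x) -> cc_le b (cc_inf S)
}.
Arguments cc_le {c}.
Arguments cc_sup {c}.
Arguments cc_inf {c}.

Definition is_sigma_algebra {X : Type} (M : (X -> Prop) -> Prop) : Prop :=
  M (fun _ => False) /\
  (forall A, M A -> M (fun x => ~ A x)) /\
  (forall F : nat -> X -> Prop, (forall n, M (F n)) -> M (fun x => exists n, F n x)).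

(** A measure on X with values in L: a monotone function on a sigma-algebra
    (the codomain [mu(empty), mu(X)] is automatic from monotonicity).
    The function is total on subsets, but only its values on measurable
    sets are ever used. *)
Record cmeasure (X : Type) (L : complete_chain) := CMeasure {
  mdom : (X -> Prop) -> Prop;
  mdom_sigma : is_sigma_algebra mdom;
  mu : (X -> Prop) -> L;
  mu_mono : forall A B, mdom A -> mdom B -> subset A B -> cc_le (mu A) (mu B)
}.
Arguments mdom {X L}.
Arguments mu {X L}.

Record symspace (X : Type) (L : complete_chain) := SymSpace {
  smeas : cmeasure X L;
  syms : (X -> X) -> Prop;
  syms_inv : forall s, syms s ->
    exists t, syms t /\ (forall x, t (s x) = x) /\ (forall y, s (t y) = y);
  syms_pres : forall s A, syms s -> mdom smeas A ->
    mdom smeas (image s A) /\ mu smeas (image s A) = mu smeas A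
}.
Arguments smeas {X L}.
Arguments syms {X L}.

Definition symmetric {X L} (XX : symspace X L) (A : X -> Prop) : Prop :=
  exists s, syms XX s /\ (forall x, image s A x <-> A x).

Definition ms {X L} (XX : symspace X L) (A : X -> Prop) : L :=
  cc_sup (fun v => exists B, mdom (smeas XX) B /\ subset B A /\
                             symmetric XX B /\ v = mu (smeas XX) B).

(** ms_r(X) = inf over measurable colorings chi : X -> r of
    sup_{i in r} ms(chi^{-1}(i)); the cardinal r is represented by a type. *)
Definition ms_r {X L} (XX : symspace X L) (r : Type) : L :=
  cc_inf (fun v => exists chi : X -> r,
     (forall i, mdom (smeas XX) (preimage chi (fun j => j = i))) /\
     v = cc_sup (fun w => exists i, w = ms XX (preimage chi (fun j => j = i)))).

(** Given a symmetric [B ⊆ f⁻¹(A)] with [sX(B) = B], pick [sY] commuting with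
    [f] and its admissible inverse [tY]. The [sY]-invariant core
    [C = ⋂ₙ (sYⁿ)⁻¹(A) ∩ (tYⁿ)⁻¹(A)] of [A] is measurable (each term is an iterated
    image under an admissible symmetry), [sY]-symmetric, and contains [f(B)].
    Hence [μX(B) ≤ μX(f⁻¹C) ≤ μY(C) ≤ ms(A)], i.e. [ms(f⁻¹A) ≤ ms(A)]; pulling
    every measurable coloring of [Y] back along [f] then gives the claim. *)

From Stdlib Require Import Arith Classical FunctionalExtensionality PropExtensionality.

Section SigmaAlgebra.
Context {X : Type} (M : (X -> Prop) -> Prop) (HM : is_sigma_algebra M).

Lemma sigma_algebra_ext A B : M A -> (forall x, A x <-> B x) -> M B.
Proof.
  intros HA HAB.
  replace B with A; [exact HA |].
  apply functional_extensionality; intro x.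
  apply propositional_extensionality, HAB.
Qed.

Lemma sigma_algebra_bigcap (F : nat -> X -> Prop) :
  (forall n, M (F n)) -> M (fun x => forall n, F n x).
Proof.
  destruct HM as [_ [HC HU]]; intro HF.
  apply sigma_algebra_ext with (fun x => ~ exists n, ~ F n x).
  - apply HC, HU; intro n; apply HC, HF.
  - intro x; split.
    + intros H n; apply NNPP; intro Hn; apply H; exists n; exact Hn.
    + intros H [n Hn]; apply Hn, H.
Qed.

Lemma sigma_algebra_setI A B : M A -> M B -> M (fun x => A x /\ B x).
Proof.
  intros HA HB.
  apply sigma_algebra_ext with (fun x => forall n, (match n with 0 => A | _ => B end) x).
  - apply sigma_algebra_bigcap; intros [|n]; assumption.
  - intro x; split.
    + intro H; exact (conj (H 0) (H 1)).
    + intros [HAx HBx] [|n]; assumption.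
Qed.

End SigmaAlgebra.

Section InvariantCore.
Context {Y : Type} (s t : Y -> Y).
Hypotheses (ts : forall y, t (s y) = y) (st : forall y, s (t y) = y).

Definition invariant_core (A : Y -> Prop) : Y -> Prop :=
  fun y => forall n, A (Nat.iter n s y) /\ A (Nat.iter n t y).

Lemma invariant_core_sub A : subset (invariant_core A) A.
Proof. intros y Hy; exact (proj1 (Hy 0)). Qed.

Lemma invariant_core_greatest (A S : Y -> Prop) :
  subset S A -> (forall y, S y -> S (s y)) -> (forall y, S y -> S (t y)) ->
  subset S (invariant_core A).
Proof.
  intros SA Ss St y Sy n; split;
    [revert y Sy | revert y Sy]; induction n as [|n IH]; intros y Sy;
    rewrite ?Nat.iter_succ_r; auto.
Qed.

Lemma image_invariant_core A :
  forall y, image s (invariant_core A) y <-> invariant_core A y.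
Proof.
  assert (core_s : forall y, invariant_core A y -> invariant_core A (s y)).
  { intros y Hy n; split.
    - rewrite <- Nat.iter_succ_r; exact (proj1 (Hy (S n))).
    - destruct n as [|n]; [exact (proj1 (Hy 1)) |].
      rewrite Nat.iter_succ_r, ts; exact (proj2 (Hy n)). }
  assert (core_t : forall y, invariant_core A y -> invariant_core A (t y)).
  { intros y Hy n; split.
    - destruct n as [|n]; [exact (proj2 (Hy 1)) |].
      rewrite Nat.iter_succ_r, st; exact (proj1 (Hy n)).
    - rewrite <- Nat.iter_succ_r; exact (proj2 (Hy (S n))). }
  intro y; split.
  - intros [x [Hx <-]]; exact (core_s x Hx).
  - intro Hy; exists (t y); split; [exact (core_t y Hy) | apply st].
Qed.

End InvariantCore.

Section SymSpace.
Context {Y : Type} {L : complete_chain} (YY : symspace Y L).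

Lemma measurable_iter_preimage (u w : Y -> Y) A :
  syms YY w -> (forall y, w (u y) = y) -> (forall y, u (w y) = y) ->
  mdom (smeas YY) A -> forall n, mdom (smeas YY) (preimage (Nat.iter n u) A).
Proof.
  intros Hw wu uw HA n; induction n as [|n IH]; [exact HA |].
  apply sigma_algebra_ext with (image w (preimage (Nat.iter n u) A)).
  - exact (proj1 (syms_pres _ _ YY w _ Hw IH)).
  - intro y; unfold preimage; rewrite Nat.iter_succ_r; split.
    + intros [x [Hx <-]]; rewrite uw; exact Hx.
    + intro Hy; exists (u y); split; [exact Hy | apply wu].
Qed.

Lemma measurable_invariant_core s t A :
  syms YY s -> syms YY t -> (forall y, t (s y) = y) -> (forall y, s (t y) = y) ->
  mdom (smeas YY) A -> mdom (smeas YY) (invariant_core s t A).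
Proof.
  intros Hs Ht ts st HA.
  pose proof (mdom_sigma _ _ (smeas YY)) as HM.
  apply (sigma_algebra_bigcap _ HM); intro n.
  apply (sigma_algebra_setI _ HM).
  - exact (measurable_iter_preimage s t A Ht ts st HA n).
  - exact (measurable_iter_preimage t s A Hs st ts HA n).
Qed.

Lemma symmetric_invariant_core s t A :
  syms YY s -> (forall y, t (s y) = y) -> (forall y, s (t y) = y) ->
  symmetric YY (invariant_core s t A).
Proof.
  intros Hs ts st; exists s; split; [exact Hs |].
  exact (image_invariant_core s t ts st A).
Qed.

Lemma mu_le_ms {B A : Y -> Prop} :
  mdom (smeas YY) B -> subset B A -> symmetric YY B ->
  cc_le (mu (smeas YY) B) (ms YY A).
Proof. intros HB BA HsB; apply cc_sup_ub; exists B; auto. Qed.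

End SymSpace.

Section Pullback.
Context {L : complete_chain} {X Y : Type} (XX : symspace X L) (YY : symspace Y L)
  (f : X -> Y).
Hypothesis Hmeas : forall B, mdom (smeas YY) B ->
  mdom (smeas XX) (preimage f B) /\
  cc_le (mu (smeas XX) (preimage f B)) (mu (smeas YY) B).
Hypothesis Hsym : forall sX, syms XX sX ->
  exists sY, syms YY sY /\ (forall x, sY (f x) = f (sX x)).

Lemma ms_preimage_le A :
  mdom (smeas YY) A -> cc_le (ms XX (preimage f A)) (ms YY A).
Proof.
  intro HA; apply cc_sup_least.
  intros v [B [HB [BA [[sX [HsX HBinv]] ->]]]].
  destruct (Hsym sX HsX) as [s [Hs Hcomm]].
  destruct (syms_inv _ _ YY s Hs) as [t [Ht [ts st]]].
  set (C := invariant_core s t A).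
  assert (HC : mdom (smeas YY) C) by exact (measurable_invariant_core YY s t A Hs Ht ts st HA).
  assert (BC : subset B (preimage f C)).
  { intros b Hb; apply (invariant_core_greatest s t A (image f B)).
    - intros y [x [Hx <-]]; exact (BA x Hx).
    - intros y [x [Hx <-]]; exists (sX x); split; [apply HBinv; exists x; auto | auto].
    - intros y [x [Hx <-]]; apply HBinv in Hx; destruct Hx as [x' [Hx' <-]].
      exists x'; split; [exact Hx' | rewrite <- Hcomm, ts; reflexivity].
    - exists b; auto. }
  destruct (Hmeas C HC) as [HfC HleC].
  apply cc_le_trans with (mu (smeas XX) (preimage f C)); [apply mu_mono; auto |].
  apply cc_le_trans with (mu (smeas YY) C); [exact HleC |].
  apply mu_le_ms; [exact HC | apply invariant_core_sub |].
  exact (symmetric_invariant_core YY s t A Hs ts st).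
Qed.

End Pullback.

Theorem proposition3p1 (L : complete_chain) (X Y : Type)
  (XX : symspace X L) (YY : symspace Y L) (f : X -> Y)
  (Hmeas : forall B, mdom (smeas YY) B ->
     mdom (smeas XX) (preimage f B) /\
     cc_le (mu (smeas XX) (preimage f B)) (mu (smeas YY) B))
  (Hsym : forall sX, syms XX sX ->
     exists sY, syms YY sY /\ (forall x, sY (f x) = f (sX x))) :
  forall r : Type, cc_le (ms_r XX r) (ms_r YY r).
Proof.
  intro r; apply cc_inf_greatest.
  intros v [chi [Hchi ->]].
  apply cc_le_trans with
    (cc_sup (fun w => exists i, w = ms XX (preimage (fun x => chi (f x)) (fun j => j = i)))).
  - apply cc_inf_lb; exists (fun x => chi (f x)); split; [| reflexivity].
    intro i; exact (proj1 (Hmeas _ (Hchi i))).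
  - apply cc_sup_least; intros w [i ->].
    apply cc_le_trans with (ms YY (preimage chi (fun j => j = i))).
    + exact (ms_preimage_le XX YY f Hmeas Hsym _ (Hchi i)).
    + apply cc_sup_ub; exists i; reflexivity.
Qed.
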